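(* Let $m\ge4$ and let $\pi$ be the permutation of $\mathbb{F}_{2^m}$ given by $\pi(x)=x^{2^m-2}$. Then for all $(a_1,a_2),(b_1,b_2)\in\mathbb{F}_{2^m}\times\mathbb{F}_{2^m}$, the identities \[\pi(x)+\pi(x+a_2)+\pi(x+b_2)+\pi(x+a_2+b_2)=0,\qquad {\rm Tr}_1^m\bigl(a_1\pi(x+a_2)+b_1\pi(x+b_2)+(a_1+b_1)\pi(x+a_2+b_2)\bigr)=0\] hold for all $x\in\mathbb{F}_{2^m}$ if and only if one of the following holds: $(a_1,a_2)=(0,0)$, $(b_1,b_2)=(0,0)$, $(a_1,a_2)=(b_1,b_2)$, or $a_2=b_2=0$.
   Context: ${\rm Tr}_1^m$ denotes the absolute trace from $\mathbb{F}_{2^m}$ to $\mathbb{F}_2$. *)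

From mathcomp Require Import all_boot all_algebra all_field.
Set Implicit Arguments. Unset Strict Implicit. Unset Printing Implicit Defensive.
Import GRing.Theory.
Local Open Scope ring_scope.

(* Absolute trace Tr_1^m : F_{2^m} -> F_2, viewed with values in F_{2^m}
   (it lands in the prime subfield): Tr(x) = sum_{i<m} x^(2^i). *)
Definition trace1 (F : finFieldType) (m : nat) (x : F) : F :=
  \sum_(i < m) x ^+ (2 ^ i)%N.

Definition pinv (F : finFieldType) (m : nat) (x : F) : F := x ^+ (2 ^ m - 2)%N.

From mathcomp Require Import all_boot all_algebra all_field.
From mathcomp Require Import ring zify.
Set Implicit Arguments. Unset Strict Implicit. Unset Printing Implicit Defensive.
Import GRing.Theory.
Local Open Scope ring_scope.

(* The field has characteristic 2 and [pinv m] is the inversion x |-> x^-1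
   (with 0^-1 = 0).  If a2, b2 are distinct and nonzero, the first identity
   fails at any x outside {0, a2, b2, a2 + b2}: pairing the terms, the sum is
   a2 / (x (x + a2)) + a2 / ((x + b2) (x + b2 + a2)), whose denominators differ
   by b2 (a2 + b2).  In every other case the second identity reduces to
   Tr(c (x^-1 + (x + b)^-1)) = 0 for all x, with b <> 0, and this forces c = 0.
   Indeed x |-> Tr(c x^-1) is the polynomial function of
   G_n = sum_(i < n) c^(2^i) X^(2^n - 1 - 2^i) for n = m; as deg G_m < 2^m,
   G_m is invariant under X |-> X + b, and since G_(n+1)' = G_n^2 the
   invariance descends to G_2 and G_3.  Comparing their values at 0 and b gives
   c b^2 + c^2 b = 0 = c b^6 + c^2 b^5 + c^4 b^3, whence c = 0. *)

Lemma mulrn_mod2_pchar2 (R : nzRingType) : 2 \in [pchar R] ->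
  forall (x : R) n, x *+ n = x *+ (n %% 2).
Proof.
move=> pchar2 x n.
by rewrite -[LHS]mulr_natr -[RHS]mulr_natr (GRing.natr_mod_pchar pchar2).
Qed.

Lemma exprD_pow2_pchar2 (R : comNzRingType) : 2 \in [pchar R] ->
  forall (x y : R) i, (x + y) ^+ (2 ^ i) = x ^+ (2 ^ i) + y ^+ (2 ^ i).
Proof.
move=> pchar2 x y i; apply: exprDn_pchar.
by rewrite pnatX (pnatE _ (isT : prime 2)) pchar2.
Qed.

Lemma sqrf_inj_pchar2 (R : idomainType) : 2 \in [pchar R] ->
  injective (fun x : R => x ^+ 2).
Proof.
move=> pchar2 x y /eqP; rewrite -!(pFrobenius_autE pchar2) -subr_eq0 -rmorphB /=.
by rewrite pFrobenius_autE sqrf_eq0 subr_eq0 => /eqP.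
Qed.

Lemma shift_invariant_deriv (R : comNzRingType) (p : {poly R}) (b : R) :
  p \Po ('X + b%:P) = p -> p^`() \Po ('X + b%:P) = p^`().
Proof.
move=> /(congr1 deriv); rewrite deriv_comp derivD derivX derivC addr0.
by rewrite mulr1.
Qed.

Definition trace_poly (R : nzRingType) (c : R) (n : nat) : {poly R} :=
  \sum_(i < n) c ^+ (2 ^ i) *: 'X^(2 ^ n - 1 - 2 ^ i).

Lemma size_trace_poly (R : nzRingType) (c : R) n :
  (size (trace_poly c n) <= 2 ^ n)%N.
Proof.
apply: (big_ind (fun p : {poly R} => size p <= 2 ^ n)%N) => [|p q|i _].
- by rewrite size_poly0.
- by move=> sp sq; rewrite (leq_trans (size_polyD _ _)) // geq_max sp sq.
rewrite (leq_trans (size_scale_leq _ _)) // size_polyXn.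
by have := expn_gt0 2 n; lia.
Qed.

Section Char2ComRing.
Variable R : comNzRingType.
Hypothesis pchar2 : 2 \in [pchar R].

Lemma deriv_trace_poly (c : R) n :
  (trace_poly c n.+1)^`() = trace_poly c n ^+ 2.
Proof.
have pchar2P : 2 \in [pchar {poly R}] by rewrite pchar_poly.
have mod2 := mulrn_mod2_pchar2 pchar2P.
have pow_gt0 k : (0 < 2 ^ k)%N by rewrite expn_gt0.
rewrite -(pFrobenius_autE pchar2P) /trace_poly linear_sum rmorph_sum /=.
rewrite big_ord_recl derivZ derivXn mod2 /= expnS expn0.
have -> : ((2 * 2 ^ n - 1 - 1) %% 2 = 0)%N by have := pow_gt0 n; lia.
rewrite scaler0 add0r; apply: eq_bigr => i _.
rewrite derivZ derivXn mod2 /bump /= add1n !expnS.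
have i_lt_n : (2 ^ i < 2 ^ n)%N by rewrite ltn_exp2l.
have -> : ((2 * 2 ^ n - 1 - 2 * 2 ^ i) %% 2 = 1)%N by have := pow_gt0 i; lia.
have -> : ((2 * 2 ^ n - 1 - 2 * 2 ^ i).-1 = (2 ^ n - 1 - 2 ^ i) * 2)%N.
  by have := pow_gt0 i; lia.
by rewrite pFrobenius_autE exprZn -!exprM mulnC.
Qed.

End Char2ComRing.

Section Char2Domain.
Variable R : idomainType.
Hypothesis pchar2 : 2 \in [pchar R].

Lemma trace_poly_shift_descent (c b : R) n k : (k <= n)%N ->
  trace_poly c n \Po ('X + b%:P) = trace_poly c n ->
  trace_poly c k \Po ('X + b%:P) = trace_poly c k.
Proof.
have pchar2P : 2 \in [pchar {poly R}] by rewrite pchar_poly.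
elim: n => [|n IH]; first by rewrite leqn0 => /eqP ->.
rewrite leq_eqVlt => /predU1P [-> //|k_le_n] /shift_invariant_deriv.
rewrite deriv_trace_poly // expr2 comp_polyM -!expr2.
by move=> /(sqrf_inj_pchar2 pchar2P); apply: IH.
Qed.

Lemma shift_invariant_trace_poly_eq0 (c b : R) n : (3 <= n)%N -> b != 0 ->
  trace_poly c n \Po ('X + b%:P) = trace_poly c n -> c = 0.
Proof.
move=> n_ge3 b_neq0 inv.
have at_b k : (k <= n)%N -> (trace_poly c k).[b] = (trace_poly c k).[0].
  move=> k_le_n; rewrite -{2}(trace_poly_shift_descent k_le_n inv).
  by rewrite horner_comp !hornerE.
have e2 := at_b 2%N (leq_trans (leqnSn 2) n_ge3).
have e3 := at_b 3%N n_ge3.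
rewrite /trace_poly !big_ord_recr !big_ord0 !hornerE /= in e2 e3.
rewrite ?mulr0 ?addr0 !expn0 !expn1 ?expr1 ?mul1r in e2 e3.
have : c * b * (c + b) = 0 by rewrite -e2; ring.
move/eqP; rewrite !mulf_eq0 (negPf b_neq0) orbF addr_eq0 oppr_pchar2 //.
case/orP=> [/eqP //|/eqP c_eq_b]; rewrite c_eq_b in e3.
have : b ^+ 7 = 0.
  by rewrite -e3 -[LHS]addr0 -(addrr_pchar2 pchar2 (b ^+ 7)); ring.
by move/eqP; rewrite expf_eq0 (negPf b_neq0) andbF.
Qed.

End Char2Domain.

Lemma finField_poly_eq0 (F : finFieldType) (p : {poly F}) :
  (size p <= #|F|)%N -> (forall x, p.[x] = 0) -> p = 0.
Proof.
move=> size_p p0; apply: (@roots_geq_poly_eq0 _ _ (enum F)).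
- by apply/allP => x _; apply/eqP/p0.
- exact: enum_uniq.
by rewrite -cardE.
Qed.

Lemma expf_card_pred (F : finFieldType) (x : F) : x != 0 -> x ^+ #|F|.-1 = 1.
Proof.
move=> x_neq0; apply: (mulIf x_neq0).
rewrite mul1r -exprSr prednK ?expf_card //.
by apply/card_gt0P; exists x.
Qed.

Lemma invr_add_shift_pchar2 (F : fieldType) : 2 \in [pchar F] ->
  forall u c : F, u != 0 -> u + c != 0 -> u^-1 + (u + c)^-1 = c / (u * (u + c)).
Proof.
move=> pchar2 u c u_neq0 uc_neq0.
transitivity ((u + (u + c)) / (u * (u + c))).
  by field; rewrite u_neq0 uc_neq0.
by rewrite addrA addrr_pchar2 // add0r.
Qed.

Lemma sum_inv_shifts_eq0 (F : finFieldType) : 2 \in [pchar F] -> (4 < #|F|)%N ->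
  forall a b : F,
  (forall x, x^-1 + (x + a)^-1 + (x + b)^-1 + (x + a + b)^-1 = 0) ->
  [|| a == 0, b == 0 | a == b].
Proof.
move=> pchar2 card_gt4 a b sum0; apply/negPn/negP; rewrite !negb_or.
case/and3P=> a_neq0 b_neq0 a_neq_b.
have neq_add0 (u v : F) : u != v -> u + v != 0.
  by rewrite addr_eq0 oppr_pchar2.
have /subsetPn [x _] : ~~ (F \subset [:: 0; a; b; a + b]).
  apply: contraL card_gt4 => /subset_leq_card le_card; rewrite -leqNgt.
  exact: leq_trans le_card (card_size _).
rewrite !inE !negb_or => /and4P [x_neq0 x_neq_a x_neq_b x_neq_ab].
have xb_neq0 := neq_add0 _ _ x_neq_b.
have xba_neq0 : x + b + a != 0 by rewrite addrAC -addrA neq_add0.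
have := sum0 x; rewrite -addrA [x + a + b]addrAC.
rewrite !invr_add_shift_pchar2 // ?neq_add0 // => /eqP.
rewrite addr_eq0 oppr_pchar2 // => /eqP/(mulfI a_neq0)/invr_inj same_denom.
have : (x + b) * (x + b + a) = x * (x + a) + b * (b + a) + (x + x) * b by ring.
rewrite addrr_pchar2 // mul0r addr0 -same_denom -[LHS]addr0 => /addrI/esym/eqP.
by rewrite mulf_eq0 (negPf b_neq0) addr_eq0 oppr_pchar2 // eq_sym (negPf a_neq_b).
Qed.

Section FinFieldChar2.
Variables (F : finFieldType) (m : nat).
Hypothesis hcard : #|F| = (2 ^ m)%N.

Lemma pchar2_card : 2 \in [pchar F].
Proof. exact: card_finPcharP hcard _. Qed.

Lemma pow2_ge4 : (1 < m)%N -> (4 <= 2 ^ m)%N.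
Proof. by move=> m_gt1; rewrite -[4%N]/(2 ^ 2)%N leq_exp2l. Qed.

Lemma pinvE (x : F) : (1 < m)%N -> pinv m x = x^-1.
Proof.
move=> /pow2_ge4 pow_ge4; have [->|x_neq0] := eqVneq x 0.
  by rewrite invr0 /pinv expr0n; case: eqP => //; lia.
apply: (mulIf x_neq0); rewrite mulVf // /pinv -exprSr -(expf_card_pred x_neq0).
by rewrite hcard; congr (_ ^+ _); lia.
Qed.

Lemma expr_inv_pow2 (x : F) i : (1 < m)%N -> (i < m)%N ->
  x^-1 ^+ (2 ^ i) = x ^+ (2 ^ m - 1 - 2 ^ i).
Proof.
move=> /pow2_ge4 pow_ge4 i_lt_m.
have pow_le : (2 * 2 ^ i <= 2 ^ m)%N by rewrite -expnS leq_exp2l.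
have pow_gt0 := expn_gt0 2 i.
have [->|x_neq0] := eqVneq x 0.
  by rewrite invr0 !expr0n expn_eq0 /=; case: eqP => //; lia.
apply: (mulIf (expf_neq0 (2 ^ i) x_neq0)).
rewrite -exprMn mulVf // expr1n -exprD subnK; last by lia.
by rewrite -hcard subn1 expf_card_pred.
Qed.

Lemma horner_trace_poly (c x : F) : (1 < m)%N ->
  (trace_poly c m).[x] = trace1 m (c * x^-1).
Proof.
move=> m_gt1; rewrite horner_sum; apply: eq_bigr => i _.
by rewrite hornerZ hornerXn exprMn expr_inv_pow2.
Qed.

Lemma trace1D (x y : F) : trace1 m (x + y) = trace1 m x + trace1 m y.
Proof.
rewrite -big_split; apply: eq_bigr => i _.
by rewrite exprD_pow2_pchar2 // pchar2_card.
Qed.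

Lemma trace1_0 : trace1 m (0 : F) = 0.
Proof. by rewrite /trace1 big1 // => i _; rewrite expr0n expn_eq0. Qed.

Lemma trace_inv_shift_eq0 (c b : F) : (2 < m)%N -> b != 0 ->
  (forall x, trace1 m (c * (x^-1 + (x + b)^-1)) = 0) -> c = 0.
Proof.
move=> m_gt2 b_neq0 trace0.
apply: (shift_invariant_trace_poly_eq0 pchar2_card m_gt2 b_neq0).
apply/eqP; rewrite -subr_eq0; apply/eqP/finField_poly_eq0 => [|x].
  rewrite hcard (leq_trans (size_polyD _ _)) // geq_max size_polyN size_trace_poly.
  rewrite (leq_trans (size_comp_poly_leq _ _)) // size_XaddC muln1.
  by case: (size _) (size_trace_poly c m) => [_|n] //=; rewrite expn_gt0.
have m_gt1 := ltnW m_gt2.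
rewrite hornerD hornerN horner_comp !hornerE !horner_trace_poly //.
by rewrite (oppr_pchar2 pchar2_card) addrC -trace1D -mulrDr trace0.
Qed.

Lemma shift_identities_trivial (a1 a2 b1 b2 : F) :
  [/\ a1 = 0 & a2 = 0] \/ [/\ b1 = 0 & b2 = 0] \/
  [/\ a1 = b1 & a2 = b2] \/ [/\ a2 = 0 & b2 = 0] ->
  forall x,
  x^-1 + (x + a2)^-1 + (x + b2)^-1 + (x + a2 + b2)^-1 = 0 /\
  trace1 m (a1 * (x + a2)^-1 + b1 * (x + b2)^-1 + (a1 + b1) * (x + a2 + b2)^-1) = 0.
Proof.
have dbl (u : F) : u + u = 0 := addrr_pchar2 pchar2_card u.
have addK (u v : F) : u + v + v = u by rewrite -addrA dbl addr0.
case=> [[-> ->]|[[-> ->]|[[-> ->]|[-> ->]]]] x; rewrite ?addr0 ?addK.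
- by rewrite dbl mul0r !add0r dbl trace1_0.
- by rewrite addrAC addK dbl mul0r addr0 dbl trace1_0.
- by rewrite !dbl mul0r addr0 trace1_0.
- by rewrite -!mulrDl !dbl mul0r trace1_0.
Qed.

Lemma shift_identities_cases (a1 a2 b1 b2 : F) : (2 < m)%N ->
  (forall x, x^-1 + (x + a2)^-1 + (x + b2)^-1 + (x + a2 + b2)^-1 = 0) ->
  (forall x, trace1 m (a1 * (x + a2)^-1 + b1 * (x + b2)^-1
                       + (a1 + b1) * (x + a2 + b2)^-1) = 0) ->
  [/\ a1 = 0 & a2 = 0] \/ [/\ b1 = 0 & b2 = 0] \/
  [/\ a1 = b1 & a2 = b2] \/ [/\ a2 = 0 & b2 = 0].
Proof.
move=> m_gt2 sum0 tr0; have pchar2 := pchar2_card.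
have dbl (u : F) : u + u = 0 := addrr_pchar2 pchar2 u.
have [a2_0|a2_neq0] := eqVneq a2 0; have [b2_0|b2_neq0] := eqVneq b2 0.
- by do 3 right.
- left; split=> //; apply: (trace_inv_shift_eq0 m_gt2 b2_neq0) => x.
  rewrite -(tr0 x) a2_0 !addr0; congr trace1.
  by rewrite -[LHS]addr0 -(mul0r (x + b2)^-1) -(dbl b1); ring.
- right; left; split=> //; apply: (trace_inv_shift_eq0 m_gt2 a2_neq0) => x.
  rewrite -(tr0 x) b2_0 !addr0; congr trace1.
  by rewrite -[LHS]addr0 -(mul0r (x + a2)^-1) -(dbl a1); ring.
have card_gt4 : (4 < #|F|)%N by rewrite hcard (@leq_trans (2 ^ 3)) ?leq_exp2l.
have := sum_inv_shifts_eq0 pchar2 card_gt4 sum0.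
rewrite (negPf a2_neq0) (negPf b2_neq0) => /eqP a2_b2.
right; right; left; split=> //; apply: (addIr b1); rewrite /= dbl.
apply: (trace_inv_shift_eq0 m_gt2 a2_neq0) => x.
by rewrite -(tr0 x) -a2_b2 -[x + a2 + a2]addrA dbl addr0; congr trace1; ring.
Qed.

End FinFieldChar2.

Theorem lemma3p9 (F : finFieldType) (m : nat) (hm : (4 <= m)%N)
  (hcard : #|F| = (2 ^ m)%N) (a1 a2 b1 b2 : F) :
  (forall x : F,
     pinv m x + pinv m (x + a2) + pinv m (x + b2) + pinv m (x + a2 + b2) = 0 /\
     trace1 m (a1 * pinv m (x + a2) + b1 * pinv m (x + b2)
               + (a1 + b1) * pinv m (x + a2 + b2)) = 0)
  <->
  ([/\ a1 = 0 & a2 = 0] \/ [/\ b1 = 0 & b2 = 0] \/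
   [/\ a1 = b1 & a2 = b2] \/ [/\ a2 = 0 & b2 = 0]).
Proof.
have pinv_inv (x : F) : pinv m x = x^-1 := pinvE hcard x (ltnW (ltnW hm)).
split=> [H | /(shift_identities_trivial hcard) trivial x]; last first.
  by rewrite !pinv_inv; apply: trivial.
apply: (shift_identities_cases hcard (ltnW hm)) => x.
- by have [+ _] := H x; rewrite !pinv_inv.
- by have [_ +] := H x; rewrite !pinv_inv.
Qed.
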